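(* Let $\mu=\mu(n)$ and $\lambda=\lambda(n)$ be positive integers depending on $n$, and consider the expected runtime of the $(\mu,\lambda)$ EA on the $n$-dimensional OneMax function. 1. If there is a constant $\varepsilon\in(0,1)$ such that $\lambda\le(1-\varepsilon)e\mu$, then the expected runtime is exponential in $n$. 2. If there is $\varepsilon=\varepsilon(n)\in(0,1)$ with $\varepsilon=\omega(1/\sqrt n)$ such that $\lambda\le(1-\varepsilon)e\mu$, then the expected runtime is super-polynomial in $n$.
   Context: OneMax is $f:\{0,1\}^n\to\mathbb{R}$, $f(x)=\sum_i x_i$. The $(\mu,\lambda)$ EA: the initial population $P_0$ consists of $\mu$ independent uniformly random points of $\{0,1\}^n$. In each generation $t=0,1,2,\dots$, it creates $\lambda$ offspring independently; each offspring is obtained by picking a parent uniformly at random from $P_t$ and flipping each bit of a copy of it independently with probability $1/n$ (standard bit mutation). $P_{t+1}$ consists of the $\mu$ offspring with the largest $f$-values, ties broken randomly (parents are discarded). The runtime is the number of fitness evaluations until an optimum (the all-ones string) is first evaluated. *)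

From Stdlib Require Import Reals Lra Lia Arith List.
Import ListNotations.
Open Scope R_scope.

Definition dist (A : Type) : Type := list (R * A).

Definition ret {A : Type} (x : A) : dist A := [(1, x)].

Definition bind {A B : Type} (d : dist A) (f : A -> dist B) : dist B :=
  flat_map (fun px => map (fun qy => (fst px * fst qy, snd qy)) (f (snd px))) d.

(** Uniform distribution over the positions of a list (duplicates counted
    with multiplicity). *)
Definition uniform {A : Type} (l : list A) : dist A :=
  map (fun x => (/ INR (length l), x)) l.

Definition mass {A : Type} (P : A -> bool) (d : dist A) : R :=
  fold_right Rplus 0 (map (fun px => if P (snd px) then fst px else 0) d).

Definition bitstring := list bool.

Fixpoint allbits (n : nat) : list bitstring :=
  match n with
  | O => [[]]
  | S m => flat_map (fun s => [false :: s; true :: s]) (allbits m)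
  end.

Definition onemax (x : bitstring) : nat := length (filter (fun b => b) x).

Definition is_opt (x : bitstring) : bool := forallb (fun b => b) x.

Fixpoint mutate (p : R) (x : bitstring) : dist bitstring :=
  match x with
  | [] => ret []
  | b :: y =>
      bind [(1 - p, b); (p, negb b)] (fun b' =>
      bind (mutate p y) (fun y' => ret (b' :: y')))
  end.

(** * Selection: the mu best (by OneMax) with uniformly random tie-breaking,
    implemented as a uniformly random shuffle followed by a stable sort
    (descending fitness) and keeping the first mu. *)
Fixpoint remove_nth {A : Type} (i : nat) (l : list A) : list A :=
  match l, i with
  | [], _ => []
  | _ :: t, O => t
  | h :: t, S j => h :: remove_nth j t
  end.

Fixpoint shuffle_aux (fuel : nat) (l : list bitstring) : dist (list bitstring) :=
  match fuel with
  | O => ret []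
  | S f =>
      bind (uniform (seq 0 (length l))) (fun i =>
      bind (shuffle_aux f (remove_nth i l)) (fun r =>
      ret (nth i l [] :: r)))
  end.

Definition shuffle (l : list bitstring) : dist (list bitstring) :=
  shuffle_aux (length l) l.

Fixpoint insert_desc (x : bitstring) (l : list bitstring) : list bitstring :=
  match l with
  | [] => [x]
  | y :: ys => if Nat.leb (onemax y) (onemax x) then x :: y :: ys
               else y :: insert_desc x ys
  end.

Fixpoint sort_desc (l : list bitstring) : list bitstring :=
  match l with
  | [] => []
  | x :: xs => insert_desc x (sort_desc xs)
  end.

Definition select (mu : nat) (off : list bitstring) : dist (list bitstring) :=
  bind (shuffle off) (fun s => ret (firstn mu (sort_desc s))).

(** * The (mu,lambda) EA as a Markov chain whose steps are single fitness
    evaluations. *)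
Inductive state : Type :=
| Init (pop : list bitstring)                    (* initial points evaluated so far *)
| Gen (pop : list bitstring) (off : list bitstring)  (* parents, offspring so far *)
| Done.                                          (* optimum has been evaluated *)

Definition step (n mu lam : nat) (s : state) : dist state :=
  match s with
  | Done => ret Done
  | Init pop =>
      bind (uniform (allbits n)) (fun x =>
        if is_opt x then ret Done
        else let pop' := pop ++ [x] in
             if Nat.eqb (length pop') mu then ret (Gen pop' [])
             else ret (Init pop'))
  | Gen pop off =>
      bind (uniform pop) (fun parent =>
      bind (mutate (/ INR n) parent) (fun y =>
        if is_opt y then ret Done
        else let off' := off ++ [y] in
             if Nat.eqb (length off') lam
             then bind (select mu off') (fun P => ret (Gen P []))
             else ret (Gen pop off')))
  end.

Fixpoint state_after (n mu lam k : nat) : dist state :=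
  match k with
  | O => ret (Init [])
  | S j => bind (state_after n mu lam j) (step n mu lam)
  end.

Definition not_done (s : state) : bool :=
  match s with Done => false | _ => true end.

(** P(T > k), T = number of fitness evaluations until the optimum is first
    evaluated *)
Definition runtime_tail (n mu lam k : nat) : R :=
  mass not_done (state_after n mu lam k).

(** E[T] >= B, using E[T] = sum_{k>=0} P(T > k) (allowing E[T] = +infinity). *)
Definition expected_runtime_ge (n mu lam : nat) (B : R) : Prop :=
  exists K : nat,
    fold_right Rplus 0 (map (runtime_tail n mu lam) (seq 0 K)) >= B.

From Pilot Require Import Defs.
From Stdlib Require Import Reals Lra Lia Arith List Permutation.
Import ListNotations.
Open Scope R_scope.

(* Idea: weigh a bit string x by w(x) = z ^ (onemax x) for a base z > 1.  A
   standard bit mutation of a string with few zero-bits multiplies its weight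
   by about e^(-1 + eps) on average, which the selection pressure lam/mu <=
   (1 - eps) e cannot compensate; strings with many zero-bits weigh almost
   nothing compared with z^n.  This gives the mutation inequality
       lam * E[w(mutant of x)] <= mu * (w(x) + B)
   with a slack B much smaller than z^n.  Consequently a potential Phi (the
   weight already created in the current phase plus the expected weight still
   to be created) rises by at most C0 + B per fitness evaluation, where
   C0 = ((1 + z)/2)^n is the mean weight of a random string, whereas Phi >= z^n
   once the optimum is evaluated.  Markov's inequality bounds P(T <= k) by
   k (C0 + B) / z^n, and summing the tail probabilities bounds E[T] below. *)

(** * Expectations over finite weighted lists *)

Definition lsum {A : Type} (f : A -> R) (l : list A) : R :=
  fold_right Rplus 0 (map f l).

Lemma lsum_app {A : Type} (f : A -> R) l1 l2 : lsum f (l1 ++ l2) = lsum f l1 + lsum f l2.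
Proof. induction l1 as [|x l IH]; unfold lsum in *; simpl; [ring|]. rewrite IH; ring. Qed.

Lemma lsum_snoc {A : Type} (f : A -> R) l x : lsum f (l ++ [x]) = lsum f l + f x.
Proof. rewrite lsum_app; unfold lsum; simpl; ring. Qed.

Lemma lsum_linear {A : Type} (f g : A -> R) a l :
  lsum (fun x => a * f x + g x) l = a * lsum f l + lsum g l.
Proof. induction l as [|x l IH]; unfold lsum in *; simpl; [ring|]. rewrite IH; ring. Qed.

Lemma lsum_const {A : Type} c (l : list A) : lsum (fun _ => c) l = INR (length l) * c.
Proof.
  induction l as [|x l IH]; unfold lsum in *; simpl length; [simpl; ring|].
  rewrite S_INR; simpl; rewrite IH; ring.
Qed.

Lemma lsum_mono {A : Type} (f g : A -> R) l :
  (forall x, In x l -> f x <= g x) -> lsum f l <= lsum g l.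
Proof.
  induction l as [|x l IH]; unfold lsum in *; simpl; intros H; [lra|].
  assert (f x <= g x) by auto.
  assert (fold_right Rplus 0 (map f l) <= fold_right Rplus 0 (map g l)) by auto.
  lra.
Qed.

Lemma lsum_nonneg {A : Type} (f : A -> R) l : (forall x, 0 <= f x) -> 0 <= lsum f l.
Proof.
  intros H. rewrite <- (Rmult_0_r (INR (length l))), <- lsum_const.
  apply lsum_mono; auto.
Qed.

Lemma lsum_perm (f : bitstring -> R) l1 l2 : Permutation l1 l2 -> lsum f l1 = lsum f l2.
Proof. induction 1; unfold lsum in *; simpl; lra. Qed.

Lemma lsum_firstn {A : Type} (f : A -> R) k l : (forall x, 0 <= f x) ->
  lsum f (firstn k l) <= lsum f l.
Proof.
  intros Hf. rewrite <- (firstn_skipn k l) at 2. rewrite lsum_app.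
  pose proof (lsum_nonneg f (skipn k l) Hf). lra.
Qed.

Definition E {A : Type} (f : A -> R) (d : Defs.dist A) : R :=
  lsum (fun px => fst px * f (snd px)) d.

Definition supported {A : Type} (P : A -> Prop) (d : Defs.dist A) : Prop :=
  forall px, In px d -> P (snd px).

Definition is_prob {A : Type} (d : Defs.dist A) : Prop :=
  (forall px, In px d -> 0 <= fst px) /\ E (fun _ => 1) d = 1.

Lemma E_cons {A : Type} (f : A -> R) p x d : E f ((p, x) :: d) = p * f x + E f d.
Proof. reflexivity. Qed.

Lemma E_app {A : Type} (f : A -> R) d1 d2 : E f (d1 ++ d2) = E f d1 + E f d2.
Proof. apply lsum_app. Qed.

Lemma E_ret {A : Type} (f : A -> R) x : E f (ret x) = f x.
Proof. unfold E, lsum, ret; simpl; ring. Qed.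

Lemma E_bind {A B : Type} (f : B -> R) (d : Defs.dist A) (g : A -> Defs.dist B) :
  E f (bind d g) = E (fun x => E f (g x)) d.
Proof.
  assert (Hscale : forall p (l : Defs.dist B),
    E f (map (fun qy => (p * fst qy, snd qy)) l) = p * E f l).
  { intros p l; induction l as [|[q y] l IH]; unfold E, lsum in *; simpl; [ring|].
    rewrite IH; ring. }
  induction d as [|[p x] d IH]; [reflexivity|].
  unfold bind in *; simpl. rewrite E_app, Hscale, IH. reflexivity.
Qed.

Lemma E_ext {A : Type} (f g : A -> R) d :
  supported (fun x => f x = g x) d -> E f d = E g d.
Proof.
  induction d as [|[p x] d IH]; intros H; [reflexivity|].
  rewrite !E_cons, IH.
  - rewrite (H (p, x) (or_introl eq_refl) : f x = g x); reflexivity.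
  - intros px Hpx; apply H; right; exact Hpx.
Qed.

Lemma E_linear {A : Type} (f g : A -> R) a d :
  E (fun x => a * f x + g x) d = a * E f d + E g d.
Proof. induction d as [|[p x] d IH]; unfold E, lsum in *; simpl; [ring|]. rewrite IH; ring. Qed.

Lemma E_scale {A : Type} (f : A -> R) a d : E (fun x => a * f x) d = a * E f d.
Proof. induction d as [|[p x] d IH]; unfold E, lsum in *; simpl; [ring|]. rewrite IH; ring. Qed.

Lemma E_mono {A : Type} (f g : A -> R) d : (forall px, In px d -> 0 <= fst px) ->
  supported (fun x => f x <= g x) d -> E f d <= E g d.
Proof.
  induction d as [|[p x] d IH]; intros Hw H; [apply Rle_refl|].
  rewrite !E_cons.
  assert (0 <= p) by (apply (Hw (p, x)); left; reflexivity).
  assert (f x <= g x) by (apply (H (p, x)); left; reflexivity).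
  assert (E f d <= E g d).
  { apply IH; intros px Hpx; [apply Hw | apply H]; right; exact Hpx. }
  nra.
Qed.

Lemma E_const {A : Type} (c : R) (d : Defs.dist A) : is_prob d -> E (fun _ => c) d = c.
Proof.
  intros [_ Hd].
  transitivity (c * E (fun _ => 1) d); [|rewrite Hd; ring].
  clear Hd; induction d as [|[p x] d IH]; unfold E, lsum in *; simpl; [ring|].
  rewrite IH; ring.
Qed.

Lemma E_bound {A : Type} (f g : A -> R) K d : is_prob d ->
  supported (fun x => f x <= K + g x) d -> E f d <= K + E g d.
Proof.
  intros Hd H. rewrite <- (E_const K d Hd), <- (Rmult_1_l (E (fun _ => K) d)).
  rewrite <- E_linear. apply E_mono; [apply Hd|].
  intros px Hpx; specialize (H px Hpx); simpl; lra.
Qed.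

Lemma E_nonneg {A : Type} (f : A -> R) d : (forall px, In px d -> 0 <= fst px) ->
  supported (fun x => 0 <= f x) d -> 0 <= E f d.
Proof.
  intros Hw H.
  assert (Hzero : E (fun _ => 0) d = 0).
  { clear Hw H. induction d as [|[p x] d IH]; [reflexivity|].
    rewrite E_cons, IH; ring. }
  rewrite <- Hzero. apply E_mono; assumption.
Qed.

Lemma mass_E {A : Type} (P : A -> bool) d :
  mass P d = E (fun x => if P x then 1 else 0) d.
Proof.
  induction d as [|[p x] d IH]; [reflexivity|].
  unfold mass in *; simpl. rewrite IH, E_cons. destruct (P x); ring.
Qed.

Lemma supported_ret {A : Type} (P : A -> Prop) x : P x -> supported P (ret x).
Proof. intros Hx px [<- | []]; exact Hx. Qed.

Lemma supported_bind {A B : Type} (P : B -> Prop) (d : Defs.dist A) (g : A -> Defs.dist B) :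
  supported (fun x => supported P (g x)) d -> supported P (bind d g).
Proof.
  intros H py Hpy. unfold bind in Hpy. apply in_flat_map in Hpy as [px [Hpx Hy]].
  apply in_map_iff in Hy as [qy [<- Hqy]]. exact (H px Hpx qy Hqy).
Qed.

Lemma supported_impl {A : Type} (P Q : A -> Prop) d :
  (forall x, P x -> Q x) -> supported P d -> supported Q d.
Proof. intros HPQ H px Hpx; exact (HPQ _ (H px Hpx)). Qed.

Lemma is_prob_ret {A : Type} (x : A) : is_prob (ret x).
Proof. split; [intros px [<- | []]; simpl; lra | rewrite E_ret; reflexivity]. Qed.

Lemma is_prob_bind {A B : Type} (d : Defs.dist A) (g : A -> Defs.dist B) :
  is_prob d -> supported (fun x => is_prob (g x)) d -> is_prob (bind d g).
Proof.
  intros [Hw Hd] Hg. split.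
  - intros py Hpy. unfold bind in Hpy. apply in_flat_map in Hpy as [px [Hpx Hy]].
    apply in_map_iff in Hy as [qy [<- Hqy]]. simpl.
    apply Rmult_le_pos; [exact (Hw px Hpx) | exact (proj1 (Hg px Hpx) qy Hqy)].
  - rewrite E_bind. transitivity (E (fun _ => 1) d); [|exact Hd].
    apply E_ext. intros px Hpx; apply (Hg px Hpx).
Qed.

Lemma E_uniform {A : Type} (f : A -> R) l : E f (uniform l) = / INR (length l) * lsum f l.
Proof.
  unfold uniform. generalize (/ INR (length l)) as c; intros c.
  induction l as [|x l IH]; unfold E, lsum in *; simpl in *; [ring|]. rewrite IH; ring.
Qed.

Lemma supported_uniform {A : Type} (l : list A) : supported (fun x => In x l) (uniform l).
Proof. intros px Hpx. unfold uniform in Hpx. apply in_map_iff in Hpx as [x [<- Hx]]; exact Hx. Qed.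

Lemma uniform_weights_nonneg {A : Type} (l : list A) :
  forall px, In px (uniform l) -> 0 <= fst px.
Proof.
  intros px Hpx. unfold uniform in Hpx. apply in_map_iff in Hpx as [x [<- Hx]]. simpl.
  left; apply Rinv_0_lt_compat, lt_0_INR. destruct l; [destruct Hx | simpl; lia].
Qed.

Lemma is_prob_uniform {A : Type} (l : list A) : l <> [] -> is_prob (uniform l).
Proof.
  intros Hl. split; [apply uniform_weights_nonneg|].
  assert (0 < INR (length l)) by (apply lt_0_INR; destruct l; [congruence | simpl; lia]).
  rewrite E_uniform, lsum_const. field. lra.
Qed.

(** * Mutation, initial sampling, shuffling and selection *)

Lemma supported_mutate p x : supported (fun y => length y = length x) (mutate p x).
Proof.
  induction x as [|b x IH]; cbn [mutate].
  - apply supported_ret; reflexivity.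
  - apply supported_bind; intros pb _. apply supported_bind; intros py Hpy.
    apply supported_ret; simpl; f_equal; exact (IH py Hpy).
Qed.

Lemma is_prob_mutate p x : 0 <= p <= 1 -> is_prob (mutate p x).
Proof.
  intros Hp. induction x as [|b x IH]; cbn [mutate]; [apply is_prob_ret|].
  apply is_prob_bind.
  - split; [intros px [<- | [<- | []]]; simpl; lra | unfold E, lsum; simpl; ring].
  - intros pb _. apply is_prob_bind; [exact IH | intros py _; apply is_prob_ret].
Qed.

Lemma allbits_length n x : In x (allbits n) -> length x = n.
Proof.
  revert x; induction n as [|n IH]; simpl; intros x Hx.
  - destruct Hx as [<- | []]; reflexivity.
  - apply in_flat_map in Hx as [s [Hs [<- | [<- | []]]]]; simpl; f_equal; auto.
Qed.

Lemma allbits_count n : length (allbits n) = (2 ^ n)%nat.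
Proof.
  induction n as [|n IH]; [reflexivity|]. simpl allbits. rewrite Nat.pow_succ_r', <- IH.
  clear IH. induction (allbits n) as [|s l IHl]; simpl; [reflexivity|]. rewrite IHl; lia.
Qed.

Lemma allbits_nonempty n : allbits n <> [].
Proof.
  intros H. pose proof (allbits_count n) as Hc. rewrite H in Hc.
  exact (Nat.pow_nonzero 2 n ltac:(lia) (eq_sym Hc)).
Qed.

Lemma remove_nth_length {A : Type} i (l : list A) : (i < length l)%nat ->
  length (remove_nth i l) = pred (length l).
Proof.
  revert i; induction l as [|x l IH]; intros i Hi; simpl in *; [lia|].
  destruct i as [|i]; [reflexivity|]. simpl. rewrite IH by lia. destruct l; simpl in *; lia.
Qed.

Lemma remove_nth_perm i (l : list bitstring) : (i < length l)%nat ->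
  Permutation l (nth i l [] :: remove_nth i l).
Proof.
  revert i; induction l as [|x l IH]; intros i Hi; simpl in *; [lia|].
  destruct i as [|i]; [reflexivity|].
  eapply perm_trans; [apply perm_skip, (IH i); lia | apply perm_swap].
Qed.

Lemma shuffle_aux_spec f l : length l = f ->
  is_prob (shuffle_aux f l) /\ supported (fun s => Permutation s l) (shuffle_aux f l).
Proof.
  revert l; induction f as [|f IH]; intros l Hl; cbn [shuffle_aux].
  - destruct l; [|simpl in Hl; lia].
    split; [apply is_prob_ret | apply supported_ret; reflexivity].
  - assert (Hidx : supported (fun i => (i < length l)%nat) (uniform (seq 0 (length l)))).
    { eapply supported_impl; [|apply supported_uniform]. intros i Hi; apply in_seq in Hi; lia. }
    assert (Hrec : supported (fun i => length (remove_nth i l) = f) (uniform (seq 0 (length l)))).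
    { eapply supported_impl; [|exact Hidx].
      intros i Hi; cbv beta in Hi; rewrite remove_nth_length; lia. }
    split.
    + apply is_prob_bind; [apply is_prob_uniform; destruct l; simpl in *; congruence|].
      intros pi Hpi. apply is_prob_bind; [apply IH, Hrec, Hpi | intros ? ?; apply is_prob_ret].
    + apply supported_bind. intros pi Hpi. apply supported_bind. intros pr Hpr.
      apply supported_ret. symmetry.
      eapply perm_trans; [apply remove_nth_perm, Hidx, Hpi|].
      apply perm_skip. symmetry. exact (proj2 (IH _ (Hrec pi Hpi)) pr Hpr).
Qed.

Lemma insert_desc_perm x l : Permutation (insert_desc x l) (x :: l).
Proof.
  induction l as [|y l IH]; simpl; [reflexivity|]. destruct (Nat.leb _ _); [reflexivity|].
  eapply perm_trans; [apply perm_skip, IH | apply perm_swap].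
Qed.

Lemma sort_desc_perm l : Permutation (sort_desc l) l.
Proof.
  induction l as [|x l IH]; simpl; [reflexivity|].
  eapply perm_trans; [apply insert_desc_perm | apply perm_skip, IH].
Qed.

(** Selection keeps [mu] offspring, all taken from [off]; only the fact that
    the survivors form a sub-multiset of [off] matters below. *)
Lemma select_spec mu off : is_prob (select mu off) /\
  supported (fun P => exists s, Permutation s off /\ P = firstn mu s) (select mu off).
Proof.
  destruct (shuffle_aux_spec (length off) off eq_refl) as [Hp Hs]. split.
  - apply is_prob_bind; [exact Hp | intros ? ?; apply is_prob_ret].
  - apply supported_bind. intros ps Hps. apply supported_ret.
    exists (sort_desc (snd ps)). split; [|reflexivity].
    eapply perm_trans; [apply sort_desc_perm | exact (Hs ps Hps)].
Qed.

(** * Bounding the mean of a potential along a Markov chain *)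

Definition bounded_prob {S : Type} (I : S -> Prop) (Phi : S -> R) (d : Defs.dist S) (b : R)
  : Prop := is_prob d /\ supported I d /\ E Phi d <= b.

Lemma bounded_prob_weaken {S : Type} (I : S -> Prop) Phi d b b' :
  b <= b' -> bounded_prob I Phi d b -> bounded_prob I Phi d b'.
Proof. intros Hb [Hp [Hs He]]. split; [exact Hp | split; [exact Hs | lra]]. Qed.

Lemma bounded_prob_bind {A S : Type} (I : S -> Prop) (Phi : S -> R)
    (d : Defs.dist A) (g : A -> Defs.dist S) (f : A -> R) K :
  is_prob d -> supported (fun x => bounded_prob I Phi (g x) (K + f x)) d ->
  bounded_prob I Phi (bind d g) (K + E f d).
Proof.
  intros Hd Hg. split; [|split].
  - apply is_prob_bind; [exact Hd|]. intros px Hpx; apply (Hg px Hpx).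
  - apply supported_bind. intros px Hpx; apply (Hg px Hpx).
  - rewrite E_bind. apply E_bound; [exact Hd|]. intros px Hpx; apply (Hg px Hpx).
Qed.

Lemma mass_complement {A : Type} (P : A -> bool) d : is_prob d ->
  1 - mass P d = E (fun x => if P x then 0 else 1) d.
Proof.
  intros Hd. rewrite mass_E.
  replace (E (fun x => if P x then 0 else 1) d)
    with (E (fun x => -1 * (if P x then 1 else 0) + 1) d)
    by (apply E_ext; intros px _; simpl; destruct (P (snd px)); ring).
  rewrite E_linear, (E_const 1 d Hd). ring.
Qed.

Lemma markov_mass {A : Type} (P : A -> bool) (Phi : A -> R) W d : is_prob d ->
  supported (fun x => 0 <= Phi x /\ (P x = false -> W <= Phi x)) d ->
  W * (1 - mass P d) <= E Phi d.
Proof.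
  intros Hd H. rewrite mass_complement, <- E_scale by exact Hd.
  apply E_mono; [apply Hd|]. intros px Hpx. destruct (H px Hpx) as [Hnonneg HW].
  simpl. destruct (P (snd px)); [lra|]. specialize (HW eq_refl); lra.
Qed.

(** The mutation rate [1/n] is a probability (for [n = 0] it is [/ 0 = 0]). *)
Lemma mutation_rate_range n : 0 <= / INR n <= 1.
Proof.
  destruct n as [|n]; [change (INR 0) with 0; rewrite Rinv_0; lra|].
  assert (1 <= INR (S n)) by (apply (le_INR 1); lia).
  split; [left; apply Rinv_0_lt_compat; lra|].
  rewrite <- Rinv_1. apply Rinv_le_contravar; lra.
Qed.

Definition init_next (mu : nat) (pop : list bitstring) (x : bitstring) : Defs.dist state :=
  if is_opt x then ret Done
  else if Nat.eqb (length (pop ++ [x])) mu then ret (Gen (pop ++ [x]) [])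
  else ret (Init (pop ++ [x])).

Definition gen_next (mu lam : nat) (pop off : list bitstring) (y : bitstring) : Defs.dist state :=
  if is_opt y then ret Done
  else if Nat.eqb (length (off ++ [y])) lam
  then bind (select mu (off ++ [y])) (fun P => ret (Gen P []))
  else ret (Gen pop (off ++ [y])).

Lemma step_Init n mu lam pop :
  step n mu lam (Init pop) = bind (uniform (allbits n)) (init_next mu pop).
Proof. reflexivity. Qed.

Lemma step_Gen n mu lam pop off :
  step n mu lam (Gen pop off) =
  bind (uniform pop) (fun x => bind (mutate (/ INR n) x) (gen_next mu lam pop off)).
Proof. reflexivity. Qed.

(** * A drift bound for the (mu,lambda) EA

    The potential [Phi] below rises by
    at most [C0 + B] per fitness evaluation and equals [W] after success. *)
Section DriftBound.
Variables (n mu lam : nat) (w : bitstring -> R) (W C0 B : R).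
Hypothesis Hmu : (0 < mu)%nat.
Hypothesis Hmulam : (mu <= lam)%nat.
Hypothesis Hw : forall x, 0 <= w x.
Hypothesis HW : forall x, length x = n -> is_opt x = true -> W <= w x.
Hypothesis HB : 0 <= B.
Hypothesis HC0 : E w (uniform (allbits n)) <= C0.
Hypothesis Hmut : forall x, length x = n ->
  INR lam * E w (mutate (/ INR n) x) <= INR mu * (w x + B).

Definition strings_n (l : list bitstring) : Prop := forall x, In x l -> length x = n.

Definition valid (s : state) : Prop :=
  match s with
  | Init pop => (length pop < mu)%nat /\ strings_n pop
  | Gen pop off => length pop = mu /\ strings_n pop /\ (length off < lam)%nat /\ strings_n off
  | Done => False
  end.

Definition running_or_done (s : state) : Prop := valid s \/ s = Done.

Definition mutant_weight (pop : list bitstring) : R :=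
  E (fun x => E w (mutate (/ INR n) x)) (uniform pop).

Definition Phi (s : state) : R :=
  match s with
  | Init pop => lsum w pop + INR (length pop) * B
  | Gen pop off => lsum w off + (INR lam - INR (length off)) * mutant_weight pop
                   + INR (length off) * (INR mu * B / INR lam)
  | Done => W
  end.

Lemma strings_n_snoc l x : strings_n l -> length x = n -> strings_n (l ++ [x]).
Proof. intros Hl Hx y Hy. apply in_app_or in Hy as [Hy | [<- | []]]; auto. Qed.

Lemma slack_nonneg : 0 <= INR mu * B / INR lam.
Proof.
  assert (0 < INR lam) by (apply lt_0_INR; lia).
  apply Rmult_le_pos; [apply Rmult_le_pos; [apply pos_INR | exact HB]|].
  left; apply Rinv_0_lt_compat; lra.
Qed.

Lemma mutant_weight_nonneg pop : 0 <= mutant_weight pop.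
Proof.
  apply E_nonneg; [apply uniform_weights_nonneg|]. intros px _.
  apply E_nonneg; [apply is_prob_mutate, mutation_rate_range|]. intros py _; apply Hw.
Qed.

Lemma mutant_weight_bound pop : length pop = mu -> strings_n pop ->
  INR lam * mutant_weight pop <= lsum w pop + INR mu * B.
Proof.
  intros Hlen Hpop. assert (Hmu' : 0 < INR mu) by (apply lt_0_INR; lia).
  unfold mutant_weight. rewrite E_uniform, Hlen.
  apply (Rmult_le_reg_l (INR mu)); [exact Hmu'|].
  replace (INR mu * (INR lam * (/ INR mu * lsum (fun x => E w (mutate (/ INR n) x)) pop)))
    with (lsum (fun x => INR lam * E w (mutate (/ INR n) x) + 0) pop)
    by (rewrite lsum_linear, (lsum_const 0); field; lra).
  replace (INR mu * (lsum w pop + INR mu * B))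
    with (lsum (fun x => INR mu * w x + INR mu * B) pop)
    by (rewrite lsum_linear, lsum_const, Hlen; ring).
  apply lsum_mono. intros x Hx. specialize (Hmut x (Hpop x Hx)). lra.
Qed.

Lemma Phi_fresh_phase P : Phi (Gen P []) = INR lam * mutant_weight P.
Proof. simpl. unfold lsum; simpl. ring. Qed.

Lemma Phi_nonneg s : valid s -> 0 <= Phi s.
Proof.
  destruct s as [pop | pop off |]; simpl; [intros _ | intros [_ [_ [Hoff _]]] | intros []].
  - pose proof (lsum_nonneg w pop Hw). pose proof (pos_INR (length pop)). nra.
  - assert (INR (length off) <= INR lam) by (apply le_INR; lia).
    pose proof slack_nonneg.
    pose proof (lsum_nonneg w off Hw). pose proof (mutant_weight_nonneg pop).
    pose proof (pos_INR (length off)). nra.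
Qed.

Lemma select_survivors off : length off = lam -> strings_n off ->
  supported (fun P => length P = mu /\ strings_n P /\ lsum w P <= lsum w off) (select mu off).
Proof.
  intros Hlen Hoff P HP. destruct (proj2 (select_spec mu off) P HP) as [s [Hperm ->]].
  split; [|split].
  - rewrite length_firstn, (Permutation_length Hperm). lia.
  - intros x Hx. apply Hoff, (Permutation_in _ Hperm).
    rewrite <- (firstn_skipn mu s). apply in_or_app; left; exact Hx.
  - rewrite <- (lsum_perm w _ _ Hperm). apply lsum_firstn, Hw.
Qed.

Lemma next_generation_spec off : length off = lam -> strings_n off ->
  bounded_prob running_or_done Phi (bind (select mu off) (fun P => ret (Gen P [])))
    (lsum w off + INR mu * B).
Proof.
  intros Hlen Hoff. pose proof (select_survivors _ Hlen Hoff) as Hsel.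
  apply bounded_prob_weaken with ((lsum w off + INR mu * B) + E (fun _ => 0) (select mu off)).
  { rewrite (E_const 0 _ (proj1 (select_spec mu off))). lra. }
  apply bounded_prob_bind; [apply select_spec|]. intros P HP.
  destruct (Hsel P HP) as [HPlen [HPn HPw]].
  split; [apply is_prob_ret | split].
  - apply supported_ret; left. simpl. repeat split; [exact HPlen | exact HPn | lia | intros ? []].
  - rewrite E_ret, Phi_fresh_phase.
    pose proof (mutant_weight_bound _ HPlen HPn). lra.
Qed.

Lemma init_next_spec pop x : valid (Init pop) -> length x = n ->
  bounded_prob running_or_done Phi (init_next mu pop x) ((Phi (Init pop) + B) + w x).
Proof.
  intros Hv Hx. pose proof (Phi_nonneg _ Hv) as HPhi. destruct Hv as [Hlen Hpop].
  pose proof (strings_n_snoc _ _ Hpop Hx) as Hpop'.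
  unfold init_next. destruct (is_opt x) eqn:Hopt; [|destruct (Nat.eqb _ mu) eqn:Hfull].
  - split; [apply is_prob_ret | split; [apply supported_ret; right; reflexivity|]].
    rewrite E_ret. change (Phi Done) with W. pose proof (HW x Hx Hopt). lra.
  - apply Nat.eqb_eq in Hfull.
    split; [apply is_prob_ret | split; [apply supported_ret; left|]].
    + simpl. split; [exact Hfull | split; [exact Hpop' | split; [lia | intros ? []]]].
    + rewrite E_ret, Phi_fresh_phase.
      eapply Rle_trans; [apply mutant_weight_bound; assumption|].
      rewrite lsum_snoc, <- Hfull, length_app, plus_INR. simpl. lra.
  - apply Nat.eqb_neq in Hfull.
    split; [apply is_prob_ret | split; [apply supported_ret; left|]].
    + simpl. rewrite length_app in *. simpl in *. split; [lia | exact Hpop'].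
    + rewrite E_ret. simpl Phi. rewrite lsum_snoc, length_app, plus_INR. simpl. lra.
Qed.

Lemma gen_next_spec pop off y : valid (Gen pop off) -> length y = n ->
  bounded_prob running_or_done Phi (gen_next mu lam pop off y)
    ((Phi (Gen pop off) - mutant_weight pop + INR mu * B / INR lam) + w y).
Proof.
  intros Hv Hy. destruct Hv as [Hlen [Hpop [Hoff_len Hoff]]].
  pose proof (strings_n_snoc _ _ Hoff Hy) as Hoff'.
  assert (Hroom : INR (length off) + 1 <= INR lam) by (rewrite <- S_INR; apply le_INR; lia).
  pose proof slack_nonneg. pose proof (mutant_weight_nonneg pop) as HM.
  pose proof (lsum_nonneg w off Hw) as Hsum. pose proof (pos_INR (length off)).
  unfold gen_next. destruct (is_opt y) eqn:Hopt; [|destruct (Nat.eqb _ lam) eqn:Hfull].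
  - split; [apply is_prob_ret | split; [apply supported_ret; right; reflexivity|]].
    rewrite E_ret. simpl Phi. pose proof (HW y Hy Hopt). nra.
  - apply Nat.eqb_eq in Hfull.
    eapply bounded_prob_weaken; [|apply next_generation_spec; assumption].
    rewrite length_app in Hfull. simpl in Hfull.
    assert (Hl : INR (length off) + 1 = INR lam) by (rewrite <- S_INR; f_equal; lia).
    assert (0 < INR lam) by lra.
    rewrite lsum_snoc. simpl Phi. rewrite <- Hl. apply Req_le. field. lra.
  - apply Nat.eqb_neq in Hfull. rewrite length_app in Hfull. simpl in Hfull.
    split; [apply is_prob_ret | split; [apply supported_ret; left|]].
    + simpl. rewrite length_app. simpl.
      repeat split; [exact Hlen | exact Hpop | lia | exact Hoff'].
    + rewrite E_ret. simpl Phi. rewrite lsum_snoc, length_app, plus_INR. simpl. lra.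
Qed.

Lemma C0_nonneg : 0 <= C0.
Proof.
  eapply Rle_trans; [|exact HC0].
  apply E_nonneg; [apply uniform_weights_nonneg | intros px _; apply Hw].
Qed.

Lemma step_Init_spec pop : valid (Init pop) ->
  bounded_prob running_or_done Phi (step n mu lam (Init pop)) ((C0 + B) + Phi (Init pop)).
Proof.
  intros Hv. rewrite step_Init.
  apply bounded_prob_weaken with ((Phi (Init pop) + B) + E w (uniform (allbits n))); [lra|].
  apply bounded_prob_bind; [apply is_prob_uniform, allbits_nonempty|].
  intros px Hpx. apply init_next_spec; [exact Hv|].
  apply allbits_length, (supported_uniform _ px Hpx).
Qed.

(** Evaluating an offspring raises the mean of [Phi] by at most
    [mu B / lam <= B]: the offspring weight [w y] averages to the
    [mutant_weight] it replaces. *)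
Lemma step_Gen_spec pop off : valid (Gen pop off) ->
  bounded_prob running_or_done Phi (step n mu lam (Gen pop off)) ((C0 + B) + Phi (Gen pop off)).
Proof.
  intros Hv.
  assert (Hpar : supported (fun x => length x = n) (uniform pop)).
  { intros px Hpx. apply (proj1 (proj2 Hv)), (supported_uniform _ px Hpx). }
  assert (Hslack : INR mu * B / INR lam <= B).
  { assert (0 < INR lam) by (apply lt_0_INR; lia).
    assert (INR mu <= INR lam) by (apply le_INR; exact Hmulam).
    apply (Rmult_le_reg_l (INR lam)); [lra|]. field_simplify; [nra | lra]. }
  rewrite step_Gen.
  apply bounded_prob_weaken with
    ((Phi (Gen pop off) - mutant_weight pop + INR mu * B / INR lam) + mutant_weight pop);
    [pose proof C0_nonneg; lra|].
  apply bounded_prob_bind.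
  - apply is_prob_uniform. intros ->. destruct Hv as [Hlen _]. simpl in Hlen. lia.
  - intros px Hpx. apply bounded_prob_bind; [apply is_prob_mutate, mutation_rate_range|].
    intros py Hpy. apply gen_next_spec; [exact Hv|].
    etransitivity; [apply (supported_mutate _ _ py Hpy) | exact (Hpar px Hpx)].
Qed.

Lemma step_spec s : running_or_done s ->
  bounded_prob running_or_done Phi (step n mu lam s) ((C0 + B) + Phi s).
Proof.
  intros [Hv | ->].
  - destruct s as [pop | pop off |];
      [apply step_Init_spec, Hv | apply step_Gen_spec, Hv | destruct Hv].
  - change (step n mu lam Done) with (ret Done). pose proof C0_nonneg.
    split; [apply is_prob_ret | split; [apply supported_ret; right; reflexivity|]].
    rewrite E_ret. lra.
Qed.

Lemma state_after_spec k :
  bounded_prob running_or_done Phi (state_after n mu lam k) (INR k * (C0 + B)).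
Proof.
  induction k as [|k IH].
  - simpl state_after. split; [apply is_prob_ret | split].
    + apply supported_ret; left. split; [exact Hmu | intros ? []].
    + rewrite E_ret. simpl. unfold lsum; simpl. lra.
  - simpl state_after.
    apply bounded_prob_weaken with ((C0 + B) + E Phi (state_after n mu lam k)).
    + destruct IH as [_ [_ IH]]. rewrite S_INR. lra.
    + apply bounded_prob_bind; [apply IH|]. intros s Hs. apply step_spec, (proj1 (proj2 IH) s Hs).
Qed.

Lemma drift_tail_bound k : 0 < W -> runtime_tail n mu lam k >= 1 - INR k * (C0 + B) / W.
Proof.
  intros HWpos. destruct (state_after_spec k) as [Hprob [Hsupp HE]].
  assert (Hmarkov : W * (1 - runtime_tail n mu lam k) <= E Phi (state_after n mu lam k)).
  { apply markov_mass; [exact Hprob|]. intros px Hpx. destruct (Hsupp px Hpx) as [Hv | Hd].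
    - split; [apply Phi_nonneg, Hv|]. destruct (snd px); [discriminate.. | destruct Hv].
    - rewrite Hd. simpl. lra. }
  apply Rle_ge. apply (Rmult_le_reg_l W); [exact HWpos|].
  replace (W * (1 - INR k * (C0 + B) / W)) with (W - INR k * (C0 + B)) by (field; lra).
  lra.
Qed.

End DriftBound.

(** * Exponential weights of bit strings *)

Definition zeros (x : bitstring) : nat := length (filter negb x).

Lemma onemax_cons b x : onemax (b :: x) = ((if b then 1 else 0) + onemax x)%nat.
Proof. unfold onemax; simpl. destruct b; reflexivity. Qed.

Lemma zeros_cons b x : zeros (b :: x) = ((if b then 0 else 1) + zeros x)%nat.
Proof. unfold zeros; simpl. destruct b; reflexivity. Qed.

Lemma onemax_plus_zeros x : (onemax x + zeros x)%nat = length x.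
Proof.
  induction x as [|b x IH]; [reflexivity|].
  rewrite onemax_cons, zeros_cons. simpl. destruct b; lia.
Qed.

Lemma is_opt_onemax x : is_opt x = true -> onemax x = length x.
Proof.
  induction x as [|b x IH]; [reflexivity|]. simpl. intros H.
  apply andb_prop in H as [-> H]. rewrite onemax_cons. simpl. f_equal. auto.
Qed.

(** The exponential weight [z ^ onemax] factorises over the independent bit
    flips of standard bit mutation: every one-bit contributes a factor
    [(1-p) z + p] and every zero-bit a factor [(1-p) + p z]. *)
Lemma E_mutate_pow z p x :
  E (fun x' => z ^ onemax x') (mutate p x) =
  ((1 - p) * z + p) ^ onemax x * ((1 - p) + p * z) ^ zeros x.
Proof.
  induction x as [|b x IH]; cbn [mutate]; [rewrite E_ret; simpl; ring|].
  assert (Hhead : forall b',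
    E (fun y' => E (fun x' => z ^ onemax x') (ret (b' :: y'))) (mutate p x)
    = z ^ (if b' then 1 else 0) * E (fun x' => z ^ onemax x') (mutate p x)).
  { intros b'. rewrite <- E_scale. apply E_ext. intros y' _.
    rewrite E_ret, onemax_cons, pow_add. reflexivity. }
  rewrite !E_bind, !E_cons. unfold E at 3, lsum; simpl fold_right.
  rewrite !E_bind, !Hhead, IH, onemax_cons, zeros_cons. destruct b; simpl; ring.
Qed.

Lemma E_uniform_pow z n :
  E (fun x => z ^ onemax x) (uniform (allbits n)) = ((1 + z) / 2) ^ n.
Proof.
  assert (Hsum : lsum (fun x => z ^ onemax x) (allbits n) = (1 + z) ^ n).
  { induction n as [|n IH]; [unfold lsum; simpl; ring|].
    simpl allbits. simpl pow. rewrite <- IH. clear IH.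
    induction (allbits n) as [|x l IHl]; unfold lsum in *; simpl; [ring|].
    rewrite IHl, !onemax_cons. simpl. fold (onemax x). ring. }
  rewrite E_uniform, Hsum, allbits_count, pow_INR.
  replace (INR 2) with 2 by (simpl; ring). unfold Rdiv. rewrite Rpow_mult_distr, pow_inv. ring.
Qed.

Lemma exp_mono a b : a <= b -> exp a <= exp b.
Proof. intros [H | ->]; [left; apply exp_increasing, H | right; reflexivity]. Qed.

Lemma exp_pow a k : exp a ^ k = exp (INR k * a).
Proof.
  induction k as [|k IH]; [simpl; rewrite Rmult_0_l, exp_0; reflexivity|].
  simpl pow. rewrite IH, <- exp_plus, S_INR. f_equal. ring.
Qed.

Lemma pow_exp_ln z k : 0 < z -> z ^ k = exp (INR k * ln z).
Proof. intros Hz. rewrite <- exp_pow, exp_ln; [reflexivity | exact Hz]. Qed.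

(** * The mutation inequality for the weight [z ^ onemax]

    With mutation rate [p = 1/n], a parent with [i] one-bits and [j]
    zero-bits has offspring of expected weight [A^i B^j], where
    [A = (1-p) z + p <= z e^(-p (1 - 1/z))] and [B = (1-p) + p z <= e^(p (z-1))].
    If few bits are zero ([j <= dl n]) this is at most [z^i e^(-1+eps)],
    which the factor [(1-eps) e] (bounding [lam/mu]) cannot compensate;
    if many bits are zero, the weight is tiny compared to [z^n]. *)
Section MutationInequality.
Variables (n : nat) (z dl eps : R).
Hypothesis Hn : (1 <= n)%nat.
Hypothesis Hz : 1 < z.
Hypothesis Heps : 0 < eps < 1.
Hypothesis Hbalance : / z + z * dl <= eps.
Hypothesis Hlarge : z <= INR n * ln z.

Let p := / INR n.
Definition factor_one : R := (1 - p) * z + p.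
Definition factor_zero : R := (1 - p) + p * z.

(** The additive slack in the mutation inequality. *)
Definition offset : R := exp (1 + INR n * ln z - dl * INR n * ln z + z * dl).

Lemma rate_facts : 0 < p <= 1 /\ p * INR n = 1.
Proof.
  assert (1 <= INR n) by (apply (le_INR 1); exact Hn).
  unfold p. split; [split|].
  - apply Rinv_0_lt_compat; lra.
  - rewrite <- Rinv_1. apply Rinv_le_contravar; lra.
  - field; lra.
Qed.

Lemma ln_z_pos : 0 < ln z.
Proof. rewrite <- ln_1. apply ln_increasing; lra. Qed.

Lemma factors_bound i j : (i + j)%nat = n ->
  factor_one ^ i * factor_zero ^ j <= z ^ i * exp (- (1 - / z) + INR j * p * (z - / z)).
Proof.
  intros Hij. destruct rate_facts as [Hp Hpn].
  assert (Hiz : 0 < / z < 1).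
  { split; [apply Rinv_0_lt_compat; lra|]. rewrite <- Rinv_1. apply Rinv_lt_contravar; lra. }
  assert (Hone : 0 <= factor_one <= z * exp (- p * (1 - / z))).
  { unfold factor_one. pose proof (exp_ineq1_le (- p * (1 - / z))). split; [nra|].
    replace ((1 - p) * z + p) with (z * (1 + - p * (1 - / z))) by (field; lra). nra. }
  assert (Hzero : 0 <= factor_zero <= exp (p * (z - 1))).
  { unfold factor_zero. pose proof (exp_ineq1_le (p * (z - 1))). split; nra. }
  assert (Hi : INR i = INR n - INR j) by (rewrite <- Hij, plus_INR; ring).
  apply Rle_trans with (z ^ i * exp (INR i * (- p * (1 - / z))) * exp (INR j * (p * (z - 1)))).
  - rewrite <- !exp_pow, <- Rpow_mult_distr.
    apply Rmult_le_compat; [apply pow_le, Hone | apply pow_le, Hzero | |];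
      apply pow_incr; [apply Hone | apply Hzero].
  - rewrite Rmult_assoc, <- exp_plus. apply Rmult_le_compat_l; [apply pow_le; lra|].
    apply exp_mono. rewrite Hi. apply Req_le.
    replace ((INR n - INR j) * (- p * (1 - / z)) + INR j * (p * (z - 1)))
      with (- (p * INR n) * (1 - / z) + INR j * p * (z - / z)) by (field; lra).
    rewrite Hpn. ring.
Qed.

(** Few zero-bits: selection cannot compensate the mutational loss. *)
Lemma few_zeros_bound i j : (i + j)%nat = n -> INR j <= dl * INR n ->
  (1 - eps) * exp 1 * (factor_one ^ i * factor_zero ^ j) <= z ^ i.
Proof.
  intros Hij Hj. destruct rate_facts as [Hp Hpn]. pose proof (pos_INR j).
  assert (Hdl : 0 <= dl) by (assert (1 <= INR n) by (apply (le_INR 1); exact Hn); nra).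
  assert (Hiz : 0 < / z < 1).
  { split; [apply Rinv_0_lt_compat; lra|]. rewrite <- Rinv_1. apply Rinv_lt_contravar; lra. }
  assert (Hjp : INR j * p <= dl).
  { apply (Rmult_le_reg_r (INR n)); [apply lt_0_INR; lia|]. rewrite Rmult_assoc, Hpn. lra. }
  assert (Hexp : - (1 - / z) + INR j * p * (z - / z) <= - 1 + eps).
  { assert (INR j * p * (z - / z) <= dl * (z - / z)) by (apply Rmult_le_compat_r; lra). nra. }
  (* [(1 - eps) e^eps <= 1] since [1 - eps <= e^(-eps)]. *)
  assert (Hdecay : (1 - eps) * exp eps <= 1).
  { pose proof (exp_ineq1_le (- eps)) as Hx. rewrite exp_Ropp in Hx.
    pose proof (exp_pos eps).
    apply (Rmult_le_reg_r (/ exp eps)); [apply Rinv_0_lt_compat; lra|].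
    rewrite Rmult_assoc, Rinv_r, Rmult_1_r, Rmult_1_l; lra. }
  pose proof (factors_bound i j Hij) as Hf. pose proof (exp_pos 1).
  assert (0 < z ^ i) by (apply pow_lt; lra).
  apply Rle_trans with ((1 - eps) * exp 1 * (z ^ i * exp (- 1 + eps))).
  - apply Rmult_le_compat_l; [nra|]. eapply Rle_trans; [exact Hf|].
    apply Rmult_le_compat_l; [lra | apply exp_mono, Hexp].
  - replace ((1 - eps) * exp 1 * (z ^ i * exp (- 1 + eps))) with ((1 - eps) * exp eps * z ^ i).
    + nra.
    + replace (- 1 + eps) with (eps + - (1)) by ring. rewrite exp_plus, exp_Ropp. field. lra.
Qed.

Lemma many_zeros_bound i j : (i + j)%nat = n -> dl * INR n < INR j ->
  exp 1 * (factor_one ^ i * factor_zero ^ j) <= offset.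
Proof.
  intros Hij Hj. destruct rate_facts as [Hp Hpn]. pose proof ln_z_pos.
  assert (Hzp : z * p <= ln z).
  { apply (Rmult_le_reg_r (INR n)); [apply lt_0_INR; lia|]. rewrite Rmult_assoc, Hpn. lra. }
  assert (Hone : 0 <= factor_one <= z) by (unfold factor_one; split; nra).
  assert (Hzero : 0 <= factor_zero <= exp (p * (z - 1))).
  { unfold factor_zero. pose proof (exp_ineq1_le (p * (z - 1))). split; nra. }
  assert (Hi : INR i = INR n - INR j) by (rewrite <- Hij, plus_INR; ring).
  unfold offset.
  replace (1 + INR n * ln z - dl * INR n * ln z + z * dl)
    with (1 + (INR n * ln z - dl * INR n * ln z + z * dl)) by ring.
  rewrite exp_plus. apply Rmult_le_compat_l; [left; apply exp_pos|].
  apply Rle_trans with (z ^ i * exp (INR j * (p * (z - 1)))).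
  - rewrite <- exp_pow. apply Rmult_le_compat; try (apply pow_le; lra);
      apply pow_incr; [apply Hone | apply Hzero].
  - rewrite (pow_exp_ln z i) by lra. rewrite <- exp_plus. apply exp_mono. rewrite Hi.
    (* Each zero-bit beyond [dl n] costs [ln z - z p >= 0] in the exponent. *)
    assert (Hcost : 0 <= (INR j - dl * INR n) * (ln z - z * p)) by (apply Rmult_le_pos; lra).
    assert (Hdz : dl * INR n * z * p = dl * z)
      by (transitivity (dl * z * (p * INR n)); [ring | rewrite Hpn; ring]).
    assert (0 <= INR j * p) by (apply Rmult_le_pos; [apply pos_INR | lra]).
    nra.
Qed.

Lemma mutation_bound i j : (i + j)%nat = n ->
  (1 - eps) * exp 1 * (factor_one ^ i * factor_zero ^ j) <= z ^ i + offset.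
Proof.
  intros Hij. assert (0 < z ^ i) by (apply pow_lt; lra).
  assert (0 <= factor_one ^ i * factor_zero ^ j).
  { destruct rate_facts as [Hp _].
    apply Rmult_le_pos; apply pow_le; unfold factor_one, factor_zero; nra. }
  pose proof (exp_pos 1). assert (0 < offset) by apply exp_pos.
  destruct (Rle_lt_dec (INR j) (dl * INR n)) as [Hj | Hj].
  - pose proof (few_zeros_bound i j Hij Hj). lra.
  - pose proof (many_zeros_bound i j Hij Hj). nra.
Qed.

End MutationInequality.

Lemma onemax_mutation_inequality n mu lam z dl eps x :
  (1 <= n)%nat -> 1 < z -> 0 < eps < 1 -> / z + z * dl <= eps -> z <= INR n * ln z ->
  INR lam <= (1 - eps) * exp 1 * INR mu -> length x = n ->
  INR lam * E (fun x' => z ^ onemax x') (mutate (/ INR n) x)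
    <= INR mu * (z ^ onemax x + offset n z dl).
Proof.
  intros Hn Hz Heps Hbal Hlarge Hlam Hx. rewrite E_mutate_pow.
  pose proof (mutation_bound n z dl eps Hn Hz Heps Hbal Hlarge (onemax x) (zeros x)) as Hbound.
  rewrite onemax_plus_zeros, Hx in Hbound. specialize (Hbound eq_refl).
  unfold factor_one, factor_zero in Hbound.
  set (X := ((1 - / INR n) * z + / INR n) ^ onemax x * (1 - / INR n + / INR n * z) ^ zeros x)
    in *.
  assert (0 <= X).
  { pose proof (mutation_rate_range n). unfold X. apply Rmult_le_pos; apply pow_le; nra. }
  pose proof (pos_INR mu).
  apply Rle_trans with (INR mu * ((1 - eps) * exp 1 * X)); [|apply Rmult_le_compat_l; lra].
  replace (INR mu * ((1 - eps) * exp 1 * X)) with ((1 - eps) * exp 1 * INR mu * X) by ring.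
  apply Rmult_le_compat_r; assumption.
Qed.

Lemma onemax_rate_bound n z dl eps : 2 <= z -> eps < 1 -> / z + z * dl <= eps ->
  (((1 + z) / 2) ^ n + offset n z dl) / z ^ n <= (3 / 4) ^ n + exp (2 - dl * INR n * ln z).
Proof.
  intros Hz Heps Hbal. assert (0 < z ^ n) by (apply pow_lt; lra).
  unfold Rdiv. rewrite Rmult_plus_distr_r. apply Rplus_le_compat.
  - rewrite <- pow_inv, <- Rpow_mult_distr. apply pow_incr. split.
    + apply Rmult_le_pos; [lra | left; apply Rinv_0_lt_compat; lra].
    + apply (Rmult_le_reg_r z); [lra|]. rewrite Rmult_assoc, Rinv_l by lra. lra.
  - unfold offset. rewrite (pow_exp_ln z n) by lra. rewrite <- exp_Ropp, <- exp_plus.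
    apply exp_mono. assert (0 < / z) by (apply Rinv_0_lt_compat; lra). lra.
Qed.

Lemma onemax_tail_bound n mu lam z dl eps k :
  (1 <= n)%nat -> (0 < mu)%nat -> (mu <= lam)%nat -> 2 <= z -> 0 < eps < 1 ->
  / z + z * dl <= eps -> z <= INR n * ln z ->
  INR lam <= (1 - eps) * exp 1 * INR mu ->
  runtime_tail n mu lam k >= 1 - INR k * ((3 / 4) ^ n + exp (2 - dl * INR n * ln z)).
Proof.
  intros Hn Hmu Hmulam Hz Heps Hbal Hlarge Hlam.
  pose proof (drift_tail_bound n mu lam (fun x => z ^ onemax x) (z ^ n) (((1 + z) / 2) ^ n)
    (offset n z dl) Hmu Hmulam (fun x => pow_le z (onemax x) ltac:(lra))) as Htail.
  specialize (Htail
    ltac:(intros x Hx Hopt; cbv beta; rewrite is_opt_onemax, Hx by exact Hopt; lra)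
    ltac:(left; apply exp_pos) ltac:(rewrite E_uniform_pow; lra)
    (fun x => onemax_mutation_inequality n mu lam z dl eps x Hn ltac:(lra) Heps Hbal Hlarge Hlam)
    k ltac:(apply pow_lt; lra)).
  assert (Hscaled : INR k * ((((1 + z) / 2) ^ n + offset n z dl) / z ^ n)
          <= INR k * ((3 / 4) ^ n + exp (2 - dl * INR n * ln z)))
    by (apply Rmult_le_compat_l; [apply pos_INR | apply (onemax_rate_bound n z dl eps); lra]).
  unfold Rdiv in Htail, Hscaled. rewrite Rmult_assoc in Htail. lra.
Qed.

(** * From tail bounds to the expected runtime *)

Lemma nat_floor X : 0 <= X -> exists K : nat, INR K <= X < INR K + 1.
Proof.
  intros HX. destruct (INR_unbounded X) as [N HN].
  induction N as [|N IH]; [simpl in HN; lra|].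
  destruct (Rlt_le_dec X (INR N)) as [Hlt | Hle]; [exact (IH Hlt)|].
  exists N. rewrite S_INR in HN. lra.
Qed.

(** If the optimum is found within [k] evaluations with probability at most
    [k r], the expected runtime is at least about [1 / (4 r)]; we record the
    form [E T >= T0] whenever [6 T0 r <= 1]. *)
Lemma runtime_lower_bound n mu lam r T0 : 0 < r -> 1 <= T0 -> 6 * T0 * r <= 1 ->
  (forall k, runtime_tail n mu lam k >= 1 - INR k * r) ->
  expected_runtime_ge n mu lam T0.
Proof.
  intros Hr HT0 HT0r Htail.
  assert (Hhalf : 0 <= / (2 * r)) by (left; apply Rinv_0_lt_compat; lra).
  destruct (nat_floor _ Hhalf) as [K [HK1 HK2]]. exists K.
  assert (HKr : INR K * r <= 1 / 2).
  { apply Rle_trans with (/ (2 * r) * r); [apply Rmult_le_compat_r; lra | right; field; lra]. }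
  change (fold_right Rplus 0 (map (runtime_tail n mu lam) (seq 0 K)))
    with (lsum (runtime_tail n mu lam) (seq 0 K)).
  assert (Hsum : INR K * (1 / 2) <= lsum (runtime_tail n mu lam) (seq 0 K)).
  { rewrite <- (length_seq K 0) at 1. rewrite <- lsum_const. apply lsum_mono.
    intros k Hk. apply in_seq in Hk. specialize (Htail k).
    assert (INR k * r <= INR K * r) by (apply Rmult_le_compat_r; [lra | apply le_INR; lia]).
    lra. }
  assert (Hinv : 6 * T0 <= / r).
  { apply (Rmult_le_reg_r r); [exact Hr|]. rewrite Rinv_l; lra. }
  assert (/ (2 * r) = / r / 2) by (field; lra).
  lra.
Qed.

Lemma onemax_runtime_bound n mu lam z dl eps T :
  (1 <= n)%nat -> (0 < mu)%nat -> (mu <= lam)%nat -> 2 <= z -> 0 < eps < 1 ->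
  / z + z * dl <= eps -> z <= INR n * ln z ->
  INR lam <= (1 - eps) * exp 1 * INR mu ->
  1 <= T -> 6 * T * ((3 / 4) ^ n + exp (2 - dl * INR n * ln z)) <= 1 ->
  expected_runtime_ge n mu lam T.
Proof.
  intros Hn Hmu Hmulam Hz Heps Hbal Hlarge Hlam HT HTr.
  apply (runtime_lower_bound _ _ _ ((3 / 4) ^ n + exp (2 - dl * INR n * ln z))); try assumption.
  - pose proof (exp_pos (2 - dl * INR n * ln z)). assert (0 < (3 / 4) ^ n) by (apply pow_lt; lra).
    lra.
  - intros k. eapply onemax_tail_bound; eassumption.
Qed.

(** * Choice of parameters *)

Lemma pow_three_quarters n : (3 / 4) ^ n <= exp (- (INR n / 4)).
Proof.
  replace (- (INR n / 4)) with (INR n * (- (1 / 4))) by field. rewrite <- exp_pow.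
  apply pow_incr. pose proof (exp_ineq1_le (- (1 / 4))). lra.
Qed.

Lemma ln_gt_half z : 2 <= z -> / 2 < ln z.
Proof.
  intros Hz. pose proof ln_lt_2. destruct (Req_dec z 2) as [-> | Hne]; [exact H|].
  assert (ln 2 < ln z) by (apply ln_increasing; lra). lra.
Qed.

Lemma exp_square_le_9 : exp 2 <= 9.
Proof.
  replace 2 with (1 + 1) by ring. rewrite exp_plus.
  pose proof exp_le_3. pose proof (exp_pos 1). nra.
Qed.

Lemma exp_rate_small a r : 59 <= a -> r <= 10 * exp (- (2 * a)) -> 6 * exp a * r <= 1.
Proof.
  intros Ha Hr. pose proof (exp_ineq1_le a) as Hlow. pose proof (exp_pos a).
  replace (- (2 * a)) with (- a + - a) in Hr by ring.
  rewrite exp_plus, exp_Ropp in Hr.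
  apply Rle_trans with (6 * exp a * (10 * (/ exp a * / exp a))).
  - apply Rmult_le_compat_l; [lra | exact Hr].
  - replace (6 * exp a * (10 * (/ exp a * / exp a))) with (60 / exp a) by (field; lra).
    apply (Rmult_le_reg_r (exp a)); [lra|]. unfold Rdiv. rewrite Rmult_assoc, Rinv_l; lra.
Qed.

(** With [z = 2/eps] and [dl = eps^2/4] we get [dl ln z >= eps^2/8], so the
    rate is at most [10 e^(-eps^2 n / 8)], small against [T = e^(eps^2 n / 16)]. *)
Lemma const_choice_rate n eps : 0 < eps < 1 -> 1000 <= eps * eps * INR n ->
  6 * exp (eps * eps / 16 * INR n)
    * ((3 / 4) ^ n + exp (2 - eps * eps / 4 * INR n * ln (2 / eps))) <= 1.
Proof.
  intros Heps Hbig. pose proof (pos_INR n).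
  assert (Hz : 2 <= 2 / eps) by (apply (Rmult_le_reg_r eps); [lra|]; field_simplify; lra).
  pose proof (ln_gt_half _ Hz).
  apply exp_rate_small; [lra|].
  assert (Hq : (3 / 4) ^ n <= exp (- (2 * (eps * eps / 16 * INR n)))).
  { eapply Rle_trans; [apply pow_three_quarters|]. apply exp_mono.
    assert (eps * eps <= 1) by nra. nra. }
  assert (He : exp (2 - eps * eps / 4 * INR n * ln (2 / eps))
               <= 9 * exp (- (2 * (eps * eps / 16 * INR n)))).
  { replace (2 - eps * eps / 4 * INR n * ln (2 / eps))
      with (2 + - (eps * eps / 4 * INR n * ln (2 / eps))) by ring.
    rewrite exp_plus. apply Rmult_le_compat; [left; apply exp_pos | left; apply exp_pos |
      apply exp_square_le_9 | apply exp_mono].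
    assert (0 <= eps * eps * INR n) by nra. nra. }
  lra.
Qed.

(** Part 1: for a constant [eps], take [z = 2/eps] and [dl = eps^2/4]. *)
Lemma exponential_runtime (mu lam : nat -> nat)
    (Hmu : forall n, (0 < mu n)%nat) (Hmulam : forall n, (mu n <= lam n)%nat)
    (eps : R) (Heps : 0 < eps < 1)
    (Hlam : forall n, INR (lam n) <= (1 - eps) * exp 1 * INR (mu n)) :
  exists c : R, 0 < c /\ exists n0 : nat, forall n : nat, (n0 <= n)%nat ->
    expected_runtime_ge n (mu n) (lam n) (exp (c * INR n)).
Proof.
  assert (Hee : 0 < eps * eps) by nra.
  exists (eps * eps / 16). split; [lra|].
  destruct (INR_unbounded (1000 / (eps * eps))) as [n0 Hn0]. exists n0. intros n Hn.
  assert (Hbig : 1000 <= eps * eps * INR n).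
  { assert (INR n0 <= INR n) by (apply le_INR; exact Hn).
    apply (Rmult_le_reg_r (/ (eps * eps))); [apply Rinv_0_lt_compat; lra|].
    replace (eps * eps * INR n * / (eps * eps)) with (INR n) by (field; lra). lra. }
  assert (Hn1 : (1 <= n)%nat) by (destruct n; [simpl in Hbig; lra | lia]).
  set (z := 2 / eps).
  assert (Hz : 2 <= z) by (unfold z; apply (Rmult_le_reg_r eps); [lra|]; field_simplify; lra).
  assert (Hzeps : z * eps = 2) by (unfold z; field; lra).
  assert (Hbal : / z + z * (eps * eps / 4) <= eps) by (unfold z; apply Req_le; field; lra).
  assert (Hlarge : z <= INR n * ln z).
  { assert (Hn4 : 4 <= eps * INR n) by nra. pose proof (ln_gt_half z Hz).
    apply Rle_trans with (INR n * / 2); [|apply Rmult_le_compat_l; [apply pos_INR | lra]].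
    apply (Rmult_le_reg_r eps); [lra|]. rewrite Hzeps. lra. }
  apply (onemax_runtime_bound n (mu n) (lam n) z (eps * eps / 4) eps); auto.
  - rewrite <- exp_0. apply exp_mono. apply Rmult_le_pos; [lra | apply pos_INR].
  - apply const_choice_rate; assumption.
Qed.

Lemma exp_ge_pow x m : 0 <= x -> (1 <= m)%nat -> (x / INR m) ^ m <= exp x.
Proof.
  intros Hx Hm. assert (0 < INR m) by (apply lt_0_INR; lia).
  replace (exp x) with (exp (x / INR m) ^ m) by (rewrite exp_pow; f_equal; field; lra).
  apply pow_incr. split; [apply Rmult_le_pos; [lra | left; apply Rinv_0_lt_compat; lra]|].
  pose proof (exp_ineq1_le (x / INR m)). lra.
Qed.

Lemma poly_le_exp n k : 12 * (4 * INR k + 4) ^ (k + 1) <= INR n ->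
  12 * INR n ^ k <= exp (INR n / 4).
Proof.
  intros H. set (Q := 4 * INR k + 4).
  assert (HQ : 4 <= Q) by (unfold Q; pose proof (pos_INR k); lra).
  assert (HQk : 0 < Q ^ (k + 1)) by (apply pow_lt; lra).
  assert (Hn : 0 <= INR n) by apply pos_INR.
  pose proof (exp_ge_pow (INR n / 4) (k + 1) ltac:(lra) ltac:(lia)) as Hexp.
  replace (INR n / 4 / INR (k + 1)) with (INR n * / Q) in Hexp
    by (unfold Q; rewrite plus_INR; simpl INR; field; pose proof (pos_INR k); lra).
  rewrite Rpow_mult_distr, pow_inv, pow_add, pow_1 in Hexp.
  eapply Rle_trans; [|exact Hexp].
  replace (INR n ^ k * INR n * / Q ^ (k + 1)) with (INR n ^ k * (INR n / Q ^ (k + 1)))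
    by (field; lra).
  rewrite (Rmult_comm 12). apply Rmult_le_compat_l; [apply pow_le; exact Hn|].
  apply (Rmult_le_reg_r (Q ^ (k + 1))); [exact HQk|].
  replace (INR n / Q ^ (k + 1) * Q ^ (k + 1)) with (INR n) by (field; lra).
  unfold Q; lra.
Qed.

(** With [z = sqrt n] and [dl = e / (2 sqrt n)] we get
    [dl n ln z = e sqrt n ln n / 4 >= (k+3) ln n] once [e sqrt n >= 4k + 12],
    so the rate is at most [1 / (6 n^k)] for large [n]. *)
Lemma sqrt_choice_rate n k e : 5 <= INR n -> 12 * (4 * INR k + 4) ^ (k + 1) <= INR n ->
  4 * INR k + 12 <= e * sqrt (INR n) ->
  6 * INR n ^ k * ((3 / 4) ^ n + exp (2 - e / (2 * sqrt (INR n)) * INR n * ln (sqrt (INR n))))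
    <= 1.
Proof.
  intros H5 Hbig Hes. set (s := sqrt (INR n)) in *. set (P := INR n ^ k).
  assert (Hss : s * s = INR n) by (apply sqrt_sqrt; lra).
  assert (Hs2 : 2 <= s) by (assert (0 <= s) by apply sqrt_pos; nra).
  pose proof (ln_gt_half s Hs2). pose proof (pos_INR k).
  assert (HP : 1 <= P) by (unfold P; rewrite <- (pow1 k); apply pow_incr; lra).
  assert (Hq : (3 / 4) ^ n <= / (12 * P)).
  { eapply Rle_trans; [apply pow_three_quarters|]. rewrite exp_Ropp.
    apply Rinv_le_contravar; [lra | apply poly_le_exp, Hbig]. }
  assert (Hd : exp (2 - e / (2 * s) * INR n * ln s) <= / (12 * P)).
  { assert (Hx : e / (2 * s) * INR n * ln s >= INR (k + 3) * ln (INR n)).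
    { rewrite <- Hss, ln_mult by lra. rewrite plus_INR. simpl (INR 3).
      replace (e / (2 * s) * (s * s) * ln s) with (ln s * (e * s) / 2) by (field; lra). nra. }
    apply Rle_trans with (exp 2 * exp (- (INR (k + 3) * ln (INR n)))).
    - rewrite <- exp_plus. apply exp_mono. lra.
    - rewrite exp_Ropp, <- pow_exp_ln, pow_add by lra. fold P.
      assert (125 <= INR n ^ 3) by (simpl; nra). pose proof exp_square_le_9.
      apply (Rmult_le_reg_r (P * INR n ^ 3)); [nra|].
      rewrite Rmult_assoc, Rinv_l by nra.
      replace (/ (12 * P) * (P * INR n ^ 3)) with (INR n ^ 3 / 12) by (field; lra). lra. }
  apply Rle_trans with (6 * P * (/ (12 * P) + / (12 * P))); [apply Rmult_le_compat_l; lra|].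
  right. field. lra.
Qed.

(** Part 2: for [eps sqrt n -> oo], take [z = sqrt n] and [dl = eps / (2 sqrt n)]. *)
Lemma superpolynomial_runtime (mu lam : nat -> nat)
    (Hmu : forall n, (0 < mu n)%nat) (Hmulam : forall n, (mu n <= lam n)%nat)
    (eps : nat -> R) (Heps : forall n, 0 < eps n < 1)
    (Hgrow : forall M : R, exists N : nat, forall n : nat, (N <= n)%nat ->
       eps n * sqrt (INR n) >= M)
    (Hlam : forall n, INR (lam n) <= (1 - eps n) * exp 1 * INR (mu n)) (k : nat) :
  exists n0 : nat, forall n : nat, (n0 <= n)%nat ->
    expected_runtime_ge n (mu n) (lam n) (INR n ^ k).
Proof.
  destruct (Hgrow (4 * INR k + 12)) as [N1 HN1].
  set (Nbig := (12 * (4 * k + 4) ^ (k + 1))%nat).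
  exists (Nat.max N1 (Nat.max Nbig 5)). intros n Hn.
  assert (Hbig : 12 * (4 * INR k + 4) ^ (k + 1) <= INR n).
  { replace (12 * (4 * INR k + 4) ^ (k + 1)) with (INR Nbig); [apply le_INR; lia|].
    unfold Nbig. rewrite mult_INR, pow_INR, plus_INR, mult_INR.
    replace (INR 12) with 12 by (simpl; ring). replace (INR 4) with 4 by (simpl; ring).
    reflexivity. }
  assert (H5 : 5 <= INR n) by (replace 5 with (INR 5) by (simpl; ring); apply le_INR; lia).
  specialize (HN1 n ltac:(lia)). destruct (Heps n) as [He0 He1].
  pose proof (sqrt_choice_rate n k (eps n) H5 Hbig ltac:(lra)) as Hrate.
  set (e := eps n) in *. set (s := sqrt (INR n)) in *.
  assert (Hss : s * s = INR n) by (apply sqrt_sqrt; lra).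
  assert (Hs2 : 2 <= s) by (assert (0 <= s) by apply sqrt_pos; nra).
  pose proof (ln_gt_half s Hs2). pose proof (pos_INR k).
  assert (Hbal : / s + s * (e / (2 * s)) <= e).
  { replace (s * (e / (2 * s))) with (e / 2) by (field; lra).
    assert (/ s <= e / 2); [|lra].
    apply (Rmult_le_reg_r s); [lra|]. rewrite Rinv_l by lra. lra. }
  assert (Hlarge : s <= INR n * ln s) by (rewrite <- Hss; nra).
  apply (onemax_runtime_bound n (mu n) (lam n) s (e / (2 * s)) e); auto; [lia|].
  rewrite <- (pow1 k). apply pow_incr. lra.
Qed.

Theorem theorem3 (mu lam : nat -> nat)
    (Hmu : forall n, (0 < mu n)%nat)
    (Hlam : forall n, (0 < lam n)%nat)
    (Hmulam : forall n, (mu n <= lam n)%nat) :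
  (* Part 1: constant epsilon => exponential expected runtime *)
  ((exists eps : R, 0 < eps < 1 /\
      forall n, INR (lam n) <= (1 - eps) * exp 1 * INR (mu n)) ->
   exists c : R, 0 < c /\ exists n0 : nat, forall n : nat, (n0 <= n)%nat ->
     expected_runtime_ge n (mu n) (lam n) (exp (c * INR n)))
  /\
  (* Part 2: epsilon(n) = omega(1/sqrt n) => super-polynomial expected runtime *)
  (forall eps : nat -> R,
     (forall n, 0 < eps n < 1) ->
     (forall M : R, exists N : nat, forall n : nat, (N <= n)%nat ->
        eps n * sqrt (INR n) >= M) ->
     (forall n, INR (lam n) <= (1 - eps n) * exp 1 * INR (mu n)) ->
   forall k : nat, exists n0 : nat, forall n : nat, (n0 <= n)%nat ->
     expected_runtime_ge n (mu n) (lam n) (INR n ^ k)).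
Proof.
  split.
  - intros [eps [Heps Hratio]]. exact (exponential_runtime mu lam Hmu Hmulam eps Heps Hratio).
  - intros eps Heps Hgrow Hratio k.
    exact (superpolynomial_runtime mu lam Hmu Hmulam eps Heps Hgrow Hratio k).
Qed.
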